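(* Let $R$ be a ring. An injective left (or right) $R$-module is flat if and only if it is Gorenstein flat.
   Context: A left $R$-module $M$ is Gorenstein flat if there exists an exact sequence $\cdots\to F_1\to F_0\to F^0\to F^1\to\cdots$ of flat left $R$-modules with $M=\mathrm{Im}(F_0\to F^0)$ which remains exact after applying $I\otimes_R-$ for every injective right $R$-module $I$ (similarly for right modules, using $-\otimes_R I$ with $I$ an injective left module). *)

(* Rings are [pzRingType] (associative, unital, possibly the
   zero ring).  Left R-modules are [lmodType R]; right R-modules are left
   modules over the converse ring, [lmodType R^c] (so [(r : R^c) *: x] is
   the right action x.r). *)
From mathcomp Require Import all_boot all_algebra.
Set Implicit Arguments. Unset Strict Implicit. Unset Printing Implicit Defensive.
Import GRing.Theory.
Local Open Scope ring_scope.

(* ---------- Tensor product A (x)_R B, A a right, B a left R-module ---------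
   Elements of A (x)_R B are represented by finite formal sums
   sum_i a_i (x) b_i, i.e. sequences of pairs; [teq s t] is the congruence
   generated by the defining relations of the tensor product (the
   presentation of A (x)_R B as a quotient of the free abelian group on
   A * B).  Since [(x,m) + (-x,m) ~ (0,m) ~ 0], every generator is invertible,
   so the quotient monoid is the abelian group A (x)_R B. *)
Inductive teq (R : pzRingType) (A : lmodType R^c) (B : lmodType R) :
    seq (A * B) -> seq (A * B) -> Prop :=
| teq_refl s : teq s s
| teq_sym s t : teq s t -> teq t s
| teq_trans s t u : teq s t -> teq t u -> teq s u
| teq_cat s1 t1 s2 t2 : teq s1 t1 -> teq s2 t2 -> teq (s1 ++ s2) (t1 ++ t2)
| teq_swap s t : teq (s ++ t) (t ++ s)
| teq_addl (x y : A) (m : B) : teq [:: (x + y, m)] [:: (x, m); (y, m)]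
| teq_addr (x : A) (m n : B) : teq [:: (x, m + n)] [:: (x, m); (x, n)]
| teq_zerol (m : B) : teq [:: (0 : A, m)] [::]
| teq_zeror (x : A) : teq [:: (x, 0 : B)] [::]
| teq_bal (r : R) (x : A) (m : B) : teq [:: ((r : R^c) *: x, m)] [:: (x, r *: m)].

Definition tmap_l (R : pzRingType) (A A' : lmodType R^c) (B : lmodType R)
  (f : A -> A') (s : seq (A * B)) : seq (A' * B) :=
  map (fun p => (f p.1, p.2)) s.
Definition tmap_r (R : pzRingType) (A : lmodType R^c) (B B' : lmodType R)
  (g : B -> B') (s : seq (A * B)) : seq (A * B') :=
  map (fun p => (p.1, g p.2)) s.

Definition injective_mod (S : pzRingType) (E : lmodType S) : Prop :=
  forall (A B : lmodType S) (f : {linear A -> B}) (g : {linear A -> E}),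
    injective f -> exists h : {linear B -> E}, forall a, h (f a) = g a.

Definition lflat (R : pzRingType) (M : lmodType R) : Prop :=
  forall (A B : lmodType R^c) (f : {linear A -> B}), injective f ->
    forall s : seq (A * M), teq (tmap_l f s) [::] -> teq s [::].

Definition rflat (R : pzRingType) (N : lmodType R^c) : Prop :=
  forall (A B : lmodType R) (f : {linear A -> B}), injective f ->
    forall s : seq (N * A), teq (tmap_r f s) [::] -> teq s [::].

(* ---------- Gorenstein flat modules ----------
   The complex ... -> F_1 -> F_0 -> F^0 -> F^1 -> ... is indexed by int with
   differentials d k : F k -> F (k+1); F_0 = F (-1), F^0 = F 0 (written
   F (-1 + 1)), and M is isomorphic to Im(F_0 -> F^0). *)
Definition lgflat (R : pzRingType) (M : lmodType R) : Prop :=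
  exists (F : int -> lmodType R) (d : forall k : int, {linear F k -> F (k + 1)}),
    [/\ (forall k, lflat (F k)),
        (forall (k : int) (y : F (k + 1)), d (k + 1) y = 0 <-> exists x, d k x = y),
        (exists e : {linear M -> F (-1 + 1)}, injective e /\
           forall y, (exists x, d (-1) x = y) <-> exists m, e m = y) &
        (* exactness of I (x)_R - applied to the complex, I injective right *)
        (forall (I : lmodType R^c), injective_mod I ->
           forall (k : int) (s : seq (I * F (k + 1))),
             teq (tmap_r (d (k + 1)) s) [::] ->
             exists t : seq (I * F k), teq (tmap_r (d k) t) s)].

Definition rgflat (R : pzRingType) (N : lmodType R^c) : Prop :=
  exists (F : int -> lmodType R^c) (d : forall k : int, {linear F k -> F (k + 1)}),
    [/\ (forall k, rflat (F k)),
        (forall (k : int) (y : F (k + 1)), d (k + 1) y = 0 <-> exists x, d k x = y),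
        (exists e : {linear N -> F (-1 + 1)}, injective e /\
           forall y, (exists x, d (-1) x = y) <-> exists m, e m = y) &
        (forall (I : lmodType R), injective_mod I ->
           forall (k : int) (s : seq (F (k + 1) * I)),
             teq (tmap_l (d (k + 1)) s) [::] ->
             exists t : seq (F k * I), teq (tmap_l (d k) t) s)].

From HB Require Import structures.
From mathcomp Require Import all_boot all_algebra.
Set Implicit Arguments. Unset Strict Implicit. Unset Printing Implicit Defensive.
Import GRing.Theory.
Local Open Scope ring_scope.

(* (=>) If M is flat, then M (+) M is flat and the periodic complex
        ... -> M (+) M -d-> M (+) M -d-> ...,   d (a, b) = (b, 0),
   is exact, its image Im d = M (+) 0 is a copy of M, and it stays exact
   after applying I (x)_R - for every right module I, because
   h (a, b) = (0, a) is a contracting homotopy: d h + h d = id. *)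

Section Injections.
Variables (S : pzRingType) (M N : lmodType S).

Definition inl0 (m : M) : (M * N)%type := (m, 0).
Definition inr0 (n : N) : (M * N)%type := (0, n).

Lemma inl0_is_linear : linear inl0.
Proof. by move=> a x y; congr (_, _); rewrite /= ?scaler0 ?addr0. Qed.
Lemma inr0_is_linear : linear inr0.
Proof. by move=> a x y; congr (_, _); rewrite /= ?scaler0 ?addr0. Qed.

HB.instance Definition _ :=
  GRing.isLinear.Build S M (M * N)%type *:%R inl0 inl0_is_linear.
HB.instance Definition _ :=
  GRing.isLinear.Build S N (M * N)%type *:%R inr0 inr0_is_linear.

End Injections.
Arguments inl0 {S M} N m.
Arguments inr0 {S} M {N} n.

Section ConeComplex.
Variables (S : pzRingType) (M : lmodType S).

Definition cone_d : {linear (M * M)%type -> (M * M)%type} := inl0 M \o snd.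
Definition cone_h : {linear (M * M)%type -> (M * M)%type} := inr0 M \o fst.

Lemma cone_exact (y : M * M) : cone_d y = 0 <-> exists x, cone_d x = y.
Proof.
case: y => a b; rewrite /cone_d /inl0 /=; split.
  by move=> /(congr1 fst) /= ->; exists (0, a).
by case=> [[x1 x2]] [_ <-].
Qed.

Lemma cone_image (y : M * M) :
  (exists x, cone_d x = y) <-> exists m, inl0 M m = y.
Proof.
rewrite /cone_d /=; split.
  by case=> [[x1 x2]] <-; exists x2.
by case=> m <-; exists (0, m).
Qed.

End ConeComplex.

Lemma injective_retraction (S : pzRingType) (M F : lmodType S)
    (e : {linear M -> F}) :
  injective_mod M -> injective e -> exists h : {linear F -> M}, cancel e h.
Proof.
move=> injM inje.
by have [h eK] := injM _ _ e (idfun : {linear M -> M}) inje; exists h.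
Qed.

Lemma teq_perm4 (R : pzRingType) (A : lmodType R^c) (B : lmodType R)
  (a b c d : seq (A * B)) : teq (a ++ b ++ c ++ d) (a ++ c ++ b ++ d).
Proof.
apply: teq_cat; first exact: teq_refl.
by rewrite !catA; apply: teq_cat; [exact: teq_swap | exact: teq_refl].
Qed.

Lemma teq_nil_cat (R : pzRingType) (A : lmodType R^c) (B : lmodType R)
  (s t : seq (A * B)) : teq s [::] -> teq t [::] -> teq (s ++ t) [::].
Proof. exact: (@teq_cat _ _ _ s [::] t [::]). Qed.

Lemma tmap_lr (R : pzRingType) (A A' : lmodType R^c) (B B' : lmodType R)
  (f : A -> A') (g : B -> B') (s : seq (A * B)) :
  tmap_l f (tmap_r g s) = tmap_r g (tmap_l f s).
Proof. by rewrite /tmap_l /tmap_r -!map_comp. Qed.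

Section LeftModules.
Variable R : pzRingType.

Lemma tmap_r_comp (A : lmodType R^c) (B B' B'' : lmodType R)
  (f : B -> B') (g : B' -> B'') (s : seq (A * B)) :
  tmap_r g (tmap_r f s) = tmap_r (g \o f) s.
Proof. by rewrite /tmap_r -map_comp. Qed.

Lemma teq_tmap_r (A : lmodType R^c) (B B' : lmodType R) (g : {linear B -> B'})
  (s t : seq (A * B)) : teq s t -> teq (tmap_r g s) (tmap_r g t).
Proof.
elim=> {s t} /=.
- by move=> s; apply: teq_refl.
- by move=> s t _; apply: teq_sym.
- by move=> s t u _ H1 _ H2; apply: teq_trans H1 H2.
- by move=> s1 t1 s2 t2 _ H1 _ H2; rewrite /tmap_r !map_cat; apply: teq_cat.
- by move=> s t; rewrite /tmap_r !map_cat; apply: teq_swap.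
- by move=> x y m; apply: teq_addl.
- by move=> x m n; rewrite /tmap_r /= raddfD; apply: teq_addr.
- by move=> m; apply: teq_zerol.
- by move=> x; rewrite /tmap_r /= raddf0; apply: teq_zeror.
- by move=> r x m; rewrite /tmap_r /= linearZ; apply: teq_bal.
Qed.

Lemma teq_split_r (A : lmodType R^c) (M N : lmodType R)
    (s : seq (A * (M * N))) :
  teq s (tmap_r (inl0 N \o fst) s ++ tmap_r (inr0 M \o snd) s).
Proof.
elim: s => [|[x [a b]] s IH] /=; first exact: teq_refl.
have split_head : teq [:: (x, (a, b))] [:: (x, (a, 0)); (x, (0, b))].
  have -> : ((a, b) : M * N) = (a, 0) + (0, b).
    by congr (_, _); rewrite /= ?addr0 ?add0r.
  exact: teq_addr.
apply: (@teq_trans _ _ _ _ ([:: (x, (a, 0)); (x, (0, b))] ++ s)).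
  by apply: (@teq_cat _ _ _ [:: _] _ s s) split_head (teq_refl s).
apply: teq_trans (teq_cat (teq_refl _) IH) _.
exact: (@teq_perm4 _ _ _ [:: _] [:: _]).
Qed.

Lemma lflat_test_map (A B : lmodType R^c) (M N : lmodType R)
    (f : {linear A -> B}) (g : {linear M -> N}) (s : seq (A * M)) :
  teq (tmap_l f s) [::] -> teq (tmap_l f (tmap_r g s)) [::].
Proof. by rewrite tmap_lr; apply: (teq_tmap_r g). Qed.

Lemma lflat_prod (M N : lmodType R) :
  lflat M -> lflat N -> lflat ((M * N)%type : lmodType R).
Proof.
move=> flatM flatN A B f injf s Hs.
have vanish1 := flatM _ _ f injf _ (lflat_test_map fst Hs).
have vanish2 := flatN _ _ f injf _ (lflat_test_map snd Hs).
apply: teq_trans (teq_split_r s) _.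
rewrite -(tmap_r_comp fst) -(tmap_r_comp snd).
exact: teq_nil_cat (teq_tmap_r _ vanish1) (teq_tmap_r _ vanish2).
Qed.

Lemma lflat_retract (M F : lmodType R) (e : {linear M -> F})
    (h : {linear F -> M}) : cancel e h -> lflat F -> lflat M.
Proof.
move=> eK flatF A B f injf s Hs.
have vanishF := flatF _ _ f injf _ (lflat_test_map e Hs).
have -> : s = tmap_r h (tmap_r e s).
  rewrite tmap_r_comp /tmap_r -[LHS]map_id.
  by apply: eq_map => -[a m] /=; rewrite eK.
exact: (teq_tmap_r h vanishF).
Qed.

(* I (x) - preserves the exactness of the complex, via the homotopy h. *)
Lemma cone_tensor_exact_r (M : lmodType R) (I : lmodType R^c)
    (s : seq (I * (M * M))) :
  teq (tmap_r (cone_d M) s) [::] ->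
  teq (tmap_r (cone_d M) (tmap_r (cone_h M) s)) s.
Proof.
move=> Hs; apply: teq_sym; apply: teq_trans (teq_split_r s) _.
rewrite -[X in teq _ X]cats0; apply: teq_cat.
  by rewrite tmap_r_comp; apply: teq_refl.
by rewrite -(tmap_r_comp (cone_d M) (cone_h M)); apply: (teq_tmap_r _ Hs).
Qed.

Lemma lflat_lgflat (M : lmodType R) : lflat M -> lgflat M.
Proof.
move=> flatM; exists (fun=> ((M * M)%type : lmodType R)), (fun=> cone_d M).
split=> [k | k y | | I _ k s Hs].
- exact: lflat_prod.
- exact: cone_exact.
- exists (inl0 M : {linear _ -> _}); split; last exact: cone_image.
  by move=> x y [].
- by exists (tmap_r (cone_h M) s); apply: cone_tensor_exact_r.
Qed.

Lemma injective_lflat (M F : lmodType R) (e : {linear M -> F}) :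
  injective_mod M -> injective e -> lflat F -> lflat M.
Proof.
move=> injM inje flatF; have [h eK] := injective_retraction injM inje.
exact: lflat_retract eK flatF.
Qed.

End LeftModules.

Section RightModules.
Variable R : pzRingType.

Lemma tmap_l_comp (A A' A'' : lmodType R^c) (B : lmodType R)
  (f : A -> A') (g : A' -> A'') (s : seq (A * B)) :
  tmap_l g (tmap_l f s) = tmap_l (g \o f) s.
Proof. by rewrite /tmap_l -map_comp. Qed.

Lemma teq_tmap_l (A A' : lmodType R^c) (B : lmodType R) (g : {linear A -> A'})
  (s t : seq (A * B)) : teq s t -> teq (tmap_l g s) (tmap_l g t).
Proof.
elim=> {s t} /=.
- by move=> s; apply: teq_refl.
- by move=> s t _; apply: teq_sym.
- by move=> s t u _ H1 _ H2; apply: teq_trans H1 H2.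
- by move=> s1 t1 s2 t2 _ H1 _ H2; rewrite /tmap_l !map_cat; apply: teq_cat.
- by move=> s t; rewrite /tmap_l !map_cat; apply: teq_swap.
- by move=> x y m; rewrite /tmap_l /= raddfD; apply: teq_addl.
- by move=> x m n; apply: teq_addr.
- by move=> m; rewrite /tmap_l /= raddf0; apply: teq_zerol.
- by move=> x; apply: teq_zeror.
- by move=> r x m; rewrite /tmap_l /= linearZ; apply: teq_bal.
Qed.

Lemma teq_split_l (M N : lmodType R^c) (B : lmodType R)
    (s : seq ((M * N) * B)) :
  teq s (tmap_l (inl0 N \o fst) s ++ tmap_l (inr0 M \o snd) s).
Proof.
elim: s => [|[[a b] x] s IH] /=; first exact: teq_refl.
have split_head : teq [:: ((a, b), x)] [:: ((a, 0), x); ((0, b), x)].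
  have -> : ((a, b) : M * N) = (a, 0) + (0, b).
    by congr (_, _); rewrite /= ?addr0 ?add0r.
  exact: teq_addl.
apply: (@teq_trans _ _ _ _ ([:: ((a, 0), x); ((0, b), x)] ++ s)).
  by apply: (@teq_cat _ _ _ [:: _] _ s s) split_head (teq_refl s).
apply: teq_trans (teq_cat (teq_refl _) IH) _.
exact: (@teq_perm4 _ _ _ [:: _] [:: _]).
Qed.

Lemma rflat_test_map (M N : lmodType R^c) (A B : lmodType R)
    (f : {linear A -> B}) (g : {linear M -> N}) (s : seq (M * A)) :
  teq (tmap_r f s) [::] -> teq (tmap_r f (tmap_l g s)) [::].
Proof. by rewrite -tmap_lr; apply: (teq_tmap_l g). Qed.

Lemma rflat_prod (M N : lmodType R^c) :
  rflat M -> rflat N -> rflat ((M * N)%type : lmodType R^c).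
Proof.
move=> flatM flatN A B f injf s Hs.
have vanish1 := flatM _ _ f injf _ (rflat_test_map fst Hs).
have vanish2 := flatN _ _ f injf _ (rflat_test_map snd Hs).
apply: teq_trans (teq_split_l s) _.
rewrite -(tmap_l_comp fst) -(tmap_l_comp snd).
exact: teq_nil_cat (teq_tmap_l _ vanish1) (teq_tmap_l _ vanish2).
Qed.

Lemma rflat_retract (M F : lmodType R^c) (e : {linear M -> F})
    (h : {linear F -> M}) : cancel e h -> rflat F -> rflat M.
Proof.
move=> eK flatF A B f injf s Hs.
have vanishF := flatF _ _ f injf _ (rflat_test_map e Hs).
have -> : s = tmap_l h (tmap_l e s).
  rewrite tmap_l_comp /tmap_l -[LHS]map_id.
  by apply: eq_map => -[m a] /=; rewrite eK.
exact: (teq_tmap_l h vanishF).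
Qed.

Lemma cone_tensor_exact_l (M : lmodType R^c) (I : lmodType R)
    (s : seq ((M * M) * I)) :
  teq (tmap_l (cone_d M) s) [::] ->
  teq (tmap_l (cone_d M) (tmap_l (cone_h M) s)) s.
Proof.
move=> Hs; apply: teq_sym; apply: teq_trans (teq_split_l s) _.
rewrite -[X in teq _ X]cats0; apply: teq_cat.
  by rewrite tmap_l_comp; apply: teq_refl.
by rewrite -(tmap_l_comp (cone_d M) (cone_h M)); apply: (teq_tmap_l _ Hs).
Qed.

Lemma rflat_rgflat (M : lmodType R^c) : rflat M -> rgflat M.
Proof.
move=> flatM; exists (fun=> ((M * M)%type : lmodType R^c)), (fun=> cone_d M).
split=> [k | k y | | I _ k s Hs].
- exact: rflat_prod.
- exact: cone_exact.
- exists (inl0 M : {linear _ -> _}); split; last exact: cone_image.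
  by move=> x y [].
- by exists (tmap_l (cone_h M) s); apply: cone_tensor_exact_l.
Qed.

Lemma injective_rflat (M F : lmodType R^c) (e : {linear M -> F}) :
  injective_mod M -> injective e -> rflat F -> rflat M.
Proof.
move=> injM inje flatF; have [h eK] := injective_retraction injM inje.
exact: rflat_retract eK flatF.
Qed.

End RightModules.

Theorem lemma2p5 (R : pzRingType) :
  (forall M : lmodType R, injective_mod M -> (lflat M <-> lgflat M)) /\
  (forall N : lmodType R^c, injective_mod N -> (rflat N <-> rgflat N)).
Proof.
split=> [M | N] injM; split.
- exact: lflat_lgflat.
- by case=> F [d [flatF _ [e [inje _]] _]]; apply: injective_lflat injM inje (flatF _).
- exact: rflat_rgflat.
- by case=> F [d [flatF _ [e [inje _]] _]]; apply: injective_rflat injM inje (flatF _).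
Qed.
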